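(* Fix $0<B<1$ and $H>0$, let $$x(s)=\frac1H\sqrt{1+B^2+2B\sin\!\big(Hs+\tfrac{3\pi}{2}\big)},\qquad z(s)=\int_{3\pi/(2H)}^{\,s+3\pi/(2H)}\frac{1+B\sin(Ht)}{\sqrt{1+B^2+2B\sin(Ht)}}\,dt ,$$ $\beta(s)=(x(s),0,z(s))$, and let $\Sigma$ be the (complete) unduloid obtained by rotating $\beta$ about the $z$-axis, with unit normal $N=(-z'\cos\theta,-z'\sin\theta,x')$ at $(x(s)\cos\theta,x(s)\sin\theta,z(s))$ and constant mean curvature $H$ with respect to $N$. For $n\in\mathbb N$ let $$t_n=-\frac1H\sin^{-1}(-B)+\frac{(4n-1)\pi}{2H}\quad(\text{so }\sin(Ht_n+\tfrac{3\pi}{2})=-B),$$ and $p_n=\beta(t_n)$. Then there is $n_0\in\mathbb N$ such that for all $n\ge n_0$, $$|\Phi|^2\langle\vec x,N\rangle^2>\tfrac12\big(2+H\langle\vec x,N\rangle\big)^2\quad\text{at }p_n.$$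
   Context: Conventions: $\sin^{-1}:[-1,1]\to[-\pi/2,\pi/2]$; shape operator $A$ w.r.t. $N$ defined by $\langle A(Y),Z\rangle=\langle\bar\nabla_YZ,N\rangle$; mean curvature $H=\operatorname{tr}A$ (unnormalized); $\Phi=\Pi-\frac H2g_\Sigma$, so $|\Phi|^2=|A|^2-H^2/2$; $\vec x$ the position vector. *)

From Stdlib Require Import Reals.
Open Scope R_scope.

Definition xprof (B H s : R) : R :=
  / H * sqrt (1 + B ^ 2 + 2 * B * sin (H * s + 3 * PI / 2)).

(* Integrand defining z(s) = int_{3pi/(2H)}^{s+3pi/(2H)} zint t dt. *)
Definition zint (B H t : R) : R :=
  (1 + B * sin (H * t)) / sqrt (1 + B ^ 2 + 2 * B * sin (H * t)).

Definition tn (B H : R) (n : nat) : R :=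
  - (1 / H) * asin (- B) + (4 * INR n - 1) * PI / (2 * H).

(* Geometry of the surface of revolution X(s,th) = (x cos th, x sin th, z)
   with N = (-z' cos th, -z' sin th, x').  Second fundamental form
   h(Y,Z) = <Dbar_Y Z, N>:  h(X_s,X_s) = x' z'' - x'' z',
   h(X_th,X_th) = x z', h(X_s,X_th) = 0; metric g_ss = x'^2+z'^2, g_thth = x^2.
   Principal curvatures (eigenvalues of A): *)
Definition kap1 (x1 x2 z1 z2 : R) : R := (x1 * z2 - x2 * z1) / (x1 ^ 2 + z1 ^ 2).
Definition kap2 (x z1 : R) : R := z1 / x.

(* |Phi|^2 = |A|^2 - H^2/2 with H = tr A (unnormalized). *)
Definition Phi2 (k1 k2 : R) : R := (k1 ^ 2 + k2 ^ 2) - (k1 + k2) ^ 2 / 2.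

(* <vec x, N> at (x cos th, x sin th, z):  -x z' + z x'. *)
Definition supp (x z x1 z1 : R) : R := - x * z1 + z * x1.

(* At [t_n] the phase satisfies [sin = -B], where the profile curve has an inflection
   point: [x'' = z'' = 0], so the meridian curvature [kap1] vanishes while the parallel
   curvature is [kap2 = z'/x = H].  Hence [|Phi|^2 = H^2/2], and with [q = <x, N>] the
   inequality reduces to [H q < -1].  At [t_n] one computes [H q = -(1 - B^2) - B H z(t_n)];
   the integrand of [z] is bounded below by [(1 - B)/(1 + B) > 0], so [z(t_n)] grows
   linearly in [n] and [H z(t_n) > B] for [n] large. *)

From Stdlib Require Import Reals Lra.
From Coquelicot Require Import Coquelicot.
Open Scope R_scope.

Lemma derivable_pt_lim_is_derive_eq (f : R -> R) (x l l' : R) :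
  derivable_pt_lim f x l -> is_derive f x l' -> l = l'.
Proof.
  intros Hl Hl'. apply is_derive_Reals in Hl'.
  exact (uniqueness_limite f x l l' Hl Hl').
Qed.

Lemma is_derive_shift (f : R -> R) (a s l : R) :
  is_derive f (s + a) l -> is_derive (fun s => f (s + a)) s l.
Proof.
  intros Hf. evar_last.
  - apply (is_derive_comp f (fun s => s + a)); [exact Hf|].
    auto_derive; reflexivity.
  - simpl. unfold scal; simpl; unfold mult; simpl. ring.
Qed.

Lemma is_derive_RInt_shift (f : R -> R) (a s : R) :
  (forall x, continuous f x) -> is_derive (fun s => RInt f a (s + a)) s (f (s + a)).
Proof.
  intros Hf. apply (is_derive_shift (RInt f a)).
  apply is_derive_RInt with (a := a); [|apply Hf].
  apply filter_forall; intro b.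
  apply (@RInt_correct R_CompleteNormedModule), (@ex_RInt_continuous R_CompleteNormedModule).
  intros; apply Hf.
Qed.

Lemma Phi2_0_gt (k q : R) : k * q < -1 -> Phi2 0 k * q ^ 2 > 1 / 2 * (2 + k * q) ^ 2.
Proof. intros Hkq. unfold Phi2. nra. Qed.

Definition xprof_d (B H s : R) : R :=
  B * cos (H * s + 3 * PI / 2) / sqrt (1 + B ^ 2 + 2 * B * sin (H * s + 3 * PI / 2)).

Section Unduloid.

Variables B H : R.
Hypotheses (hB0 : 0 < B) (hB1 : B < 1) (hH : 0 < H).

Lemma radicand_pos (u : R) : 0 < 1 + B ^ 2 + 2 * B * sin u.
Proof. pose proof (SIN_bound u). nra. Qed.

Lemma zint_continuous (x : R) : continuous (zint B H) x.
Proof.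
  apply (@ex_derive_continuous R_AbsRing R_NormedModule). unfold zint.
  auto_derive. split; [apply radicand_pos|]. split; [|auto].
  apply Rgt_not_eq, sqrt_lt_R0, radicand_pos.
Qed.

Lemma zint_ge (x : R) : (1 - B) / (1 + B) <= zint B H x.
Proof.
  unfold zint. pose proof (SIN_bound (H * x)) as Hu.
  set (u := sin (H * x)) in *.
  assert (HF := radicand_pos (H * x)). fold u in HF.
  set (S := sqrt (1 + B ^ 2 + 2 * B * u)).
  assert (HS : 0 < S) by (apply sqrt_lt_R0; auto).
  assert (HS2 : S ^ 2 = 1 + B ^ 2 + 2 * B * u) by (apply pow2_sqrt; lra).
  assert (HSle : S <= 1 + B) by nra.
  apply Rle_trans with ((1 - B) / S).
  - apply Rmult_le_compat_l; [lra|]. apply Rinv_le_contravar; lra.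
  - apply Rmult_le_compat_r; [left; apply Rinv_0_lt_compat; lra|]. nra.
Qed.

Lemma is_derive_xprof (s : R) : is_derive (xprof B H) s (xprof_d B H s).
Proof.
  unfold xprof, xprof_d.
  assert (hF := radicand_pos (H * s + 3 * PI / 2)).
  assert (hS := sqrt_lt_R0 _ hF).
  auto_derive; replace (B * (B * 1)) with (B ^ 2) by ring; [lra|]. field. lra.
Qed.

Lemma is_derive_xprof_d_crit (s : R) :
  sin (H * s + 3 * PI / 2) = - B -> is_derive (xprof_d B H) s 0.
Proof.
  intros Hs. pose proof (sin2_cos2 (H * s + 3 * PI / 2)) as Hsc.
  rewrite Hs in Hsc; unfold Rsqr in Hsc.
  assert (HS : 0 < 1 - B ^ 2) by nra.
  unfold xprof_d.
  auto_derive; replace (B * (B * 1)) with (B ^ 2) by ring; rewrite Hs;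
    replace (1 + B ^ 2 + 2 * B * - B) with (1 - B ^ 2) by ring.
  - split; [lra|]. split; [apply Rgt_not_eq, sqrt_lt_R0; lra|auto].
  - assert (hS2 := sqrt_sqrt (1 - B ^ 2) (Rlt_le _ _ HS)).
    assert (hS := sqrt_lt_R0 _ HS).
    set (S := sqrt (1 - B ^ 2)) in *. set (C := cos _) in *.
    field_simplify; [|lra]. replace (C ^ 2) with (S ^ 2) by nra. field; lra.
Qed.

Lemma is_derive_zint_crit (u : R) : sin (H * u) = - B -> is_derive (zint B H) u 0.
Proof.
  intros Hs. assert (HS : 0 < 1 - B ^ 2) by nra.
  unfold zint.
  auto_derive; replace (B * (B * 1)) with (B ^ 2) by ring; rewrite Hs;
    replace (1 + B ^ 2 + 2 * B * - B) with (1 - B ^ 2) by ring.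
  - split; [lra|]. split; [apply Rgt_not_eq, sqrt_lt_R0; lra|auto].
  - assert (hS2 := sqrt_sqrt (1 - B ^ 2) (Rlt_le _ _ HS)).
    assert (hS := sqrt_lt_R0 _ HS).
    set (S := sqrt (1 - B ^ 2)) in *.
    field_simplify; [|lra].
    replace (S ^ 2) with (1 - B ^ 2) by (rewrite <- hS2; ring). field; lra.
Qed.

Lemma tn_phase (n : nat) :
  sin (H * tn B H n + 3 * PI / 2) = - B /\
  cos (H * tn B H n + 3 * PI / 2) = - sqrt (1 - B ^ 2).
Proof.
  replace (H * tn B H n + 3 * PI / 2) with (asin B + PI + 2 * INR n * PI)
    by (unfold tn; rewrite asin_opp; field; lra).
  rewrite sin_period, cos_period, neg_sin, neg_cos, sin_asin, cos_asin by lra.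
  split; [reflexivity|]. unfold Rsqr. do 3 f_equal. ring.
Qed.

Lemma tn_ge (n : nat) : (2 * INR n - 1) * PI <= H * tn B H n.
Proof.
  unfold tn. rewrite asin_opp. pose proof (asin_bound B).
  replace (H * (- (1 / H) * - asin B + (4 * INR n - 1) * PI / (2 * H)))
    with (asin B + (4 * INR n - 1) * PI / 2) by (field; lra).
  lra.
Qed.

Let shift := 3 * PI / (2 * H).

Lemma tn_shift (n : nat) : H * (tn B H n + shift) = H * tn B H n + 3 * PI / 2.
Proof. unfold shift. field. lra. Qed.

Lemma ex_RInt_zint (u v : R) : ex_RInt (zint B H) u v.
Proof.
  apply (@ex_RInt_continuous R_CompleteNormedModule). intros; apply zint_continuous.
Qed.

Section Profile.

Variables z x1 x2 z1 z2 : R -> R.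
Hypotheses
  (hz : forall (s : R) (pr : Riemann_integrable (zint B H) shift (s + shift)),
          z s = RiemannInt pr)
  (hx1 : forall s, derivable_pt_lim (xprof B H) s (x1 s))
  (hx2 : forall s, derivable_pt_lim x1 s (x2 s))
  (hz1 : forall s, derivable_pt_lim z s (z1 s))
  (hz2 : forall s, derivable_pt_lim z1 s (z2 s)).

Lemma z_RInt (s : R) : z s = RInt (zint B H) shift (s + shift).
Proof.
  rewrite (hz s (ex_RInt_Reals_0 _ _ _ (ex_RInt_zint _ _))). symmetry. apply RInt_Reals.
Qed.

Lemma z1_zint (s : R) : z1 s = zint B H (s + shift).
Proof.
  eapply derivable_pt_lim_is_derive_eq; [apply hz1|].
  apply (is_derive_ext (fun s => RInt (zint B H) shift (s + shift))).
  - intro; symmetry; apply z_RInt.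
  - apply is_derive_RInt_shift, zint_continuous.
Qed.

Lemma x1_xprof_d (s : R) : x1 s = xprof_d B H s.
Proof. exact (derivable_pt_lim_is_derive_eq _ s _ _ (hx1 s) (is_derive_xprof s)). Qed.

Lemma z_ge_linear (s : R) : 0 <= s -> s * ((1 - B) / (1 + B)) <= z s.
Proof.
  intros Hs. rewrite z_RInt.
  apply Rle_trans with (RInt (fun _ => (1 - B) / (1 + B)) shift (s + shift)).
  - rewrite RInt_const. unfold scal; simpl; unfold mult; simpl. lra.
  - apply RInt_le; [lra|apply ex_RInt_const|apply ex_RInt_zint|].
    intros; apply zint_ge.
Qed.

Lemma z_tn_eventually_gt :
  exists n0 : nat, forall n, (n0 <= n)%nat -> B < H * z (tn B H n).
Proof.
  set (m := (1 - B) / (1 + B)).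
  assert (hm0 : 0 < m) by (unfold m; apply Rdiv_lt_0_compat; lra).
  assert (hm1 : m < 1)
    by (unfold m; apply (Rmult_lt_reg_r (1 + B)); [lra|]; field_simplify; lra).
  destruct (INR_unbounded (/ m)) as [n0 Hn0].
  exists n0. intros n Hn.
  assert (Hnm : INR n * m > 1).
  { apply le_INR in Hn. rewrite <- (Rinv_l m) by lra.
    apply Rmult_lt_compat_r; lra. }
  assert (Hn1 : INR n > 1) by nra.
  pose proof (tn_ge n). pose proof PI2_1.
  set (t := tn B H n) in *.
  assert (Ht : INR n <= H * t) by nra.
  assert (Hz : t * m <= z t) by (apply z_ge_linear; nra).
  assert (H * (t * m) <= H * z t) by (apply Rmult_le_compat_l; lra).
  nra.
Qed.

Lemma z1_tn (n : nat) : z1 (tn B H n) = sqrt (1 - B ^ 2).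
Proof.
  destruct (tn_phase n) as [Hs _].
  assert (HS : 0 < 1 - B ^ 2) by nra.
  assert (hS2 := sqrt_sqrt (1 - B ^ 2) (Rlt_le _ _ HS)).
  assert (hS := sqrt_lt_R0 _ HS).
  rewrite z1_zint. unfold zint. rewrite tn_shift, Hs.
  replace (1 + B ^ 2 + 2 * B * - B) with (1 - B ^ 2) by ring.
  replace (1 + B * - B) with (1 - B ^ 2) by ring.
  rewrite <- hS2 at 1. field. lra.
Qed.

Lemma z2_tn (n : nat) : z2 (tn B H n) = 0.
Proof.
  destruct (tn_phase n) as [Hs _].
  eapply derivable_pt_lim_is_derive_eq; [apply hz2|].
  apply (is_derive_ext (fun s => zint B H (s + shift))); [intro; symmetry; apply z1_zint|].
  apply is_derive_shift, is_derive_zint_crit. rewrite tn_shift. exact Hs.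
Qed.

Lemma x2_tn (n : nat) : x2 (tn B H n) = 0.
Proof.
  eapply derivable_pt_lim_is_derive_eq; [apply hx2|].
  apply (is_derive_ext (xprof_d B H)); [intro; symmetry; apply x1_xprof_d|].
  apply is_derive_xprof_d_crit, tn_phase.
Qed.

Lemma x1_tn (n : nat) : x1 (tn B H n) = - B.
Proof.
  destruct (tn_phase n) as [Hs Hc].
  assert (HS : 0 < 1 - B ^ 2) by nra.
  assert (hS := sqrt_lt_R0 _ HS).
  rewrite x1_xprof_d. unfold xprof_d. rewrite Hs, Hc.
  replace (1 + B ^ 2 + 2 * B * - B) with (1 - B ^ 2) by ring.
  field. lra.
Qed.

Lemma xprof_tn (n : nat) : xprof B H (tn B H n) = sqrt (1 - B ^ 2) / H.
Proof.
  destruct (tn_phase n) as [Hs _].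
  unfold xprof. rewrite Hs.
  replace (1 + B ^ 2 + 2 * B * - B) with (1 - B ^ 2) by ring.
  unfold Rdiv. ring.
Qed.

Lemma kap1_tn (n : nat) :
  kap1 (x1 (tn B H n)) (x2 (tn B H n)) (z1 (tn B H n)) (z2 (tn B H n)) = 0.
Proof. unfold kap1. rewrite x2_tn, z2_tn. unfold Rdiv. ring. Qed.

Lemma kap2_tn (n : nat) : kap2 (xprof B H (tn B H n)) (z1 (tn B H n)) = H.
Proof.
  assert (hS := sqrt_lt_R0 (1 - B ^ 2) ltac:(nra)).
  unfold kap2. rewrite xprof_tn, z1_tn. field. lra.
Qed.

Lemma H_supp_tn (n : nat) :
  H * supp (xprof B H (tn B H n)) (z (tn B H n)) (x1 (tn B H n)) (z1 (tn B H n))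
  = - (1 - B ^ 2) - B * (H * z (tn B H n)).
Proof.
  assert (hS2 := sqrt_sqrt (1 - B ^ 2) ltac:(nra)).
  unfold supp. rewrite xprof_tn, x1_tn, z1_tn.
  set (S := sqrt (1 - B ^ 2)) in *. rewrite <- hS2. field. lra.
Qed.

End Profile.
End Unduloid.

Theorem lemma3p7 (B H : R) (hB0 : 0 < B) (hB1 : B < 1) (hH : 0 < H)
  (z x1 x2 z1 z2 : R -> R)
  (hz : forall (s : R)
          (pr : Riemann_integrable (zint B H) (3 * PI / (2 * H)) (s + 3 * PI / (2 * H))),
          z s = RiemannInt pr)
  (hx1 : forall s, derivable_pt_lim (xprof B H) s (x1 s))
  (hx2 : forall s, derivable_pt_lim x1 s (x2 s))
  (hz1 : forall s, derivable_pt_lim z s (z1 s))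
  (hz2 : forall s, derivable_pt_lim z1 s (z2 s)) :
  exists n0 : nat, forall n : nat, (n0 <= n)%nat ->
    let t := tn B H n in
    let k1 := kap1 (x1 t) (x2 t) (z1 t) (z2 t) in
    let k2 := kap2 (xprof B H t) (z1 t) in
    let q := supp (xprof B H t) (z t) (x1 t) (z1 t) in
    Phi2 k1 k2 * q ^ 2 > 1 / 2 * (2 + H * q) ^ 2.
Proof.
  destruct (z_tn_eventually_gt B H hB0 hB1 hH z hz) as [n0 Hz].
  exists n0. intros n Hn. cbv zeta.
  rewrite (kap1_tn B H hB0 hB1 hH z x1 x2 z1 z2 hz hx1 hx2 hz1 hz2),
    (kap2_tn B H hB0 hB1 hH z z1 hz hz1).
  apply Phi2_0_gt.
  rewrite (H_supp_tn B H hB0 hB1 hH z x1 z1 hz hx1 hz1).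
  specialize (Hz n Hn). nra.
Qed.
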